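(* Let $n,M\ge1$ be integers, $\mathcal X=\{x^{(1)},\dots,x^{(L)}\}\subset\mathbb C$ a set of $L$ channel input symbols, $\sigma^2>0$, $g:\mathbb C\to[0,+\infty]$ measurable, $\epsilon>0$, $B,\delta\in\mathbb R$. Let $\mathscr C$ be a homogeneous $(n,M,\epsilon,B,\delta)$-code (as defined in the context), let $p_\ell=\int_{\mathcal E_\ell}f_{Y|X}(y|x^{(\ell)})dy$ for $\ell=1,\dots,L$, assume $\sum_jp_j>0$, and let $Q(x^{(\ell)})=p_\ell/\sum_{j=1}^Lp_j$. Then $$\epsilon\ge1-\exp\Big(-nH(P_{\mathscr C})-nD(P_{\mathscr C}\|Q)+n\log\sum_{j=1}^Lp_j\Big).$$
   Context: Channel: outputs $\boldsymbol Y=\boldsymbol x+\boldsymbol N_1$, $\boldsymbol Z=\boldsymbol x+\boldsymbol N_2$, all noise components i.i.d. complex circularly symmetric Gaussian with real and imaginary parts of zero mean and variance $\sigma^2/2$; $f_{Y|X}(y|x)=\frac1{\pi\sigma^2}\exp(-|y-x|^2/\sigma^2)$, $f_{\boldsymbol Y|\boldsymbol X}(\boldsymbol y|\boldsymbol x)=\prod_tf_{Y|X}(y_t|x_t)$ (same for $\boldsymbol Z$). An $(n,M)$-code is $\mathscr C=\{(\boldsymbol u(i),\mathcal D_i)\}_{i=1}^M$ with $\boldsymbol u(i)\in\mathcal X^n$, $|u_t(i)|\le P$ for a fixed $P>0$, pairwise disjoint measurable $\mathcal D_i\subseteq\mathbb C^n$, $M\le2^{n\lfloor\log_2L\rfloor}$;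 decoding sets are of product form $\mathcal D_i=\mathcal D_{i,1}\times\cdots\times\mathcal D_{i,n}$, $\mathcal D_{i,t}\subseteq\mathbb C$ measurable. $\gamma_i(\mathscr C)=1-\int_{\mathcal D_i}f_{\boldsymbol Y|\boldsymbol X}(\boldsymbol y|\boldsymbol u(i))d\boldsymbol y$, $\gamma=\frac1M\sum_i\gamma_i$; $(n,M,\epsilon)$-code: $\gamma<\epsilon$. With $\bar g(\boldsymbol z)=\frac1n\sum_tg(z_t)$, $\theta_i=\Pr[\bar g(\boldsymbol Z)<B\mid\boldsymbol X=\boldsymbol u(i)]$, $\theta=\frac1M\sum_i\theta_i$; $(n,M,\epsilon,B,\delta)$-code: $(n,M,\epsilon)$-code with $\theta<\delta$. Types: $P_{\boldsymbol u(i)}(x^{(\ell)})=\frac1n\#\{t:u_t(i)=x^{(\ell)}\}$, $P_{\mathscr C}=\frac1M\sum_iP_{\boldsymbol u(i)}$. For each $\ell$, $\mathcal E_\ell=\mathcal D_{i^\star,t^\star}$ where $(i^\star,t^\star)$ minimizes $\int_{\mathcal D_{i,t}}f_{Y|X}(y|x^{(\ell)})dy$ over $\{1,\dots,M\}\times\{1,\dots,n\}$. The code is homogeneous if $P_{\boldsymbol u(i)}=P_{\mathscr C}$ for every $i$, and $\mathcal D_{i,t}=\mathcal E_\ell$ whenever $u_t(i)=x^{(\ell)}$. $H$ is entropy and $D(P\|Q)=\sum_xP(x)\log\frac{P(x)}{Q(x)}$ relative entropy, with natural logarithms. *)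

From HB Require Import structures.
From mathcomp Require Import all_boot all_order all_algebra.
From mathcomp Require Import all_classical all_reals all_analysis.
From mathcomp Require Import measurable_realfun lebesgue_integral_theory.lebesgue_integral.
Set Implicit Arguments. Unset Strict Implicit. Unset Printing Implicit Defensive.
Import Order.TTheory GRing.Theory Num.Theory.
Local Open Scope classical_set_scope.
Local Open Scope ring_scope.

(* The complex plane is modelled as R * R (real part, imaginary part),
   with Borel sigma-algebra of the product and Lebesgue measure on R^2. *)
Definition cplx (R : realType) := (R * R)%type.

Definition leb2 (R : realType) : set (R * R) -> \bar R :=
  (@lebesgue_measure R \x @lebesgue_measure R)%E.

Definition cnorm (R : realType) (c : R * R) : R := Num.sqrt (c.1 ^+ 2 + c.2 ^+ 2).
Definition csqdist (R : realType) (y x : R * R) : R :=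
  (y.1 - x.1) ^+ 2 + (y.2 - x.2) ^+ 2.

Definition dens (R : realType) (s2 : R) (x y : R * R) : R :=
  (pi * s2)^-1 * expR (- (csqdist y x / s2)).

Definition intC (R : realType) (s2 : R) (x : R * R) (A : set (R * R)) : \bar R :=
  (\int[(@leb2 R)]_(y in A) (dens s2 x y)%:E)%E.

(* Integral over C^n of h(y) * prod_t f(y_t | x_t), written as the iterated
   (Tonelli) integral: first coordinate outermost. *)
Fixpoint iint (R : realType) (s2 : R) (n : nat) :
    n.-tuple (R * R) -> (n.-tuple (R * R) -> \bar R) -> \bar R :=
  match n return n.-tuple (R * R) -> (n.-tuple (R * R) -> \bar R) -> \bar R with
  | 0 => fun _ h => h [tuple]
  | m.+1 => fun x h =>
      (\int[(@leb2 R)]_z ((dens s2 (thead x) z)%:E *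
         iint s2 (behead_tuple x) (fun w => h (cons_tuple z w))))%E
  end.

Definition PrCh (R : realType) (s2 : R) (n : nat) (x : n.-tuple (R * R))
    (A : set (n.-tuple (R * R))) : R :=
  fine (iint s2 x (fun z => (\1_A z : R)%:E)).

Definition prodset (R : realType) (n : nat) (Dt : 'I_n -> set (R * R)) :
    set (n.-tuple (R * R)) := [set y | forall t, Dt t (tnth y t)].

Definition is_code (R : realType) (L : nat) (xs : 'I_L -> R * R) (P : R)
    (n M : nat) (u : 'I_M -> n.-tuple (R * R)) (D : 'I_M -> 'I_n -> set (R * R)) :=
  [/\ forall i t, exists l, tnth (u i) t = xs l,
      forall i t, cnorm (tnth (u i) t) <= P,
      forall i t, measurable (D i t),
      forall i j, i != j -> prodset (D i) `&` prodset (D j) = set0 &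
      (M <= 2 ^ (n * trunc_log 2 L))%N].

Definition gamma_i (R : realType) (s2 : R) (n M : nat) (u : 'I_M -> n.-tuple (R * R))
    (D : 'I_M -> 'I_n -> set (R * R)) (i : 'I_M) : R :=
  1 - PrCh s2 (u i) (prodset (D i)).

Definition gamma (R : realType) (s2 : R) (n M : nat) (u : 'I_M -> n.-tuple (R * R))
    (D : 'I_M -> 'I_n -> set (R * R)) : R :=
  M%:R^-1 * \sum_(i < M) gamma_i s2 u D i.

Definition gbar (R : realType) (n : nat) (g : R * R -> \bar R) (z : n.-tuple (R * R)) : \bar R :=
  ((n%:R^-1)%:E * \sum_(t < n) g (tnth z t))%E.

Definition theta_i (R : realType) (s2 : R) (g : R * R -> \bar R) (B : R) (n M : nat)
    (u : 'I_M -> n.-tuple (R * R)) (i : 'I_M) : R :=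
  PrCh s2 (u i) [set z | (gbar g z < B%:E)%E].

Definition theta (R : realType) (s2 : R) (g : R * R -> \bar R) (B : R) (n M : nat)
    (u : 'I_M -> n.-tuple (R * R)) : R :=
  M%:R^-1 * \sum_(i < M) theta_i s2 g B u i.

Definition is_code_eBd (R : realType) (L : nat) (xs : 'I_L -> R * R) (P s2 : R)
    (g : R * R -> \bar R) (eps B delta : R)
    (n M : nat) (u : 'I_M -> n.-tuple (R * R)) (D : 'I_M -> 'I_n -> set (R * R)) :=
  [/\ is_code xs P u D, gamma s2 u D < eps & theta s2 g B u < delta].

Definition ctype (R : realType) (L : nat) (xs : 'I_L -> R * R) (n M : nat)
    (u : 'I_M -> n.-tuple (R * R)) (i : 'I_M) (l : 'I_L) : R :=
  n%:R^-1 * #|[set t : 'I_n | tnth (u i) t == xs l]|%:R.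

Definition codetype (R : realType) (L : nat) (xs : 'I_L -> R * R) (n M : nat)
    (u : 'I_M -> n.-tuple (R * R)) (l : 'I_L) : R :=
  M%:R^-1 * \sum_(i < M) ctype xs u i l.

Definition is_E (R : realType) (s2 : R) (x : R * R) (n M : nat)
    (D : 'I_M -> 'I_n -> set (R * R)) (E : set (R * R)) :=
  exists i0 t0, E = D i0 t0 /\
    forall i t, (intC s2 x (D i0 t0) <= intC s2 x (D i t))%E.

Definition homogeneous (R : realType) (L : nat) (xs : 'I_L -> R * R) (s2 : R)
    (n M : nat) (u : 'I_M -> n.-tuple (R * R)) (D : 'I_M -> 'I_n -> set (R * R))
    (E : 'I_L -> set (R * R)) :=
  [/\ forall l, is_E s2 (xs l) D (E l),
      forall i l, ctype xs u i l = codetype xs u l &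
      forall i t l, tnth (u i) t = xs l -> D i t = E l].

Definition entropy (R : realType) (L : nat) (p : 'I_L -> R) : R :=
  - \sum_(l < L) (if p l == 0 then 0 else p l * ln (p l)).

Definition relent (R : realType) (L : nat) (p q : 'I_L -> R) : \bar R :=
  \big[+%E/0%E]_(l < L) (if p l == 0 then 0%E
                 else if q l == 0 then +oo%E
                 else ((p l * ln (p l / q l))%:E)).

From HB Require Import structures.
From mathcomp Require Import all_boot all_order all_algebra.
From mathcomp Require Import all_classical all_reals all_analysis.
From mathcomp Require Import measurable_realfun lebesgue_integral_theory.lebesgue_integral.
From mathcomp Require Import ring.
Set Implicit Arguments. Unset Strict Implicit. Unset Printing Implicit Defensive.
Import Order.TTheory GRing.Theory Num.Theory.
Local Open Scope classical_set_scope.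
Local Open Scope ring_scope.

(* In a homogeneous code every codeword has the same type P_C and every
   occurrence of the symbol x^(l) is decoded on the same set E_l.  As the
   channel is memoryless and the decoding sets are products, the probability
   of correct decoding of each codeword factorises as prod_l p_l^(n P_C(l)),
   so gamma = 1 - prod_l p_l^(n P_C(l)).  The exponent
   -nH(P_C) - nD(P_C||Q) + n log(sum_j p_j) is exactly
   n sum_l P_C(l) log p_l, the logarithm of this product.  If P_C charges a
   symbol with p_l = 0, the product vanishes, gamma = 1 < eps, and the bound
   is trivial. *)

Lemma fineM_ge0 (R : realDomainType) (a b : \bar R) :
  (0 <= a)%E -> (0 <= b)%E -> fine (a * b) = fine a * fine b.
Proof.
case: a b => [r||] [s||] //=; rewrite ?lee_fin ?mulr0 ?mul0r // => a0 b0.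
- by have [->|r0] := eqVneq r 0; rewrite ?mul0e // gt0_muley // lt_def r0.
- by have [->|s0] := eqVneq s 0; rewrite ?mule0 // gt0_mulye // lt_def s0.
Qed.

Lemma fine_prod_ge0 (R : realDomainType) (I : Type) (s : seq I) (P : pred I)
    (F : I -> \bar R) : (forall i, P i -> 0 <= F i)%E ->
  fine (\big[*%E/1%E]_(i <- s | P i) F i) = \prod_(i <- s | P i) fine (F i).
Proof.
move=> F_ge0.
suff [] : (0 <= \big[*%E/1%E]_(i <- s | P i) F i)%E /\
  fine (\big[*%E/1%E]_(i <- s | P i) F i) = \prod_(i <- s | P i) fine (F i) by [].
apply: (big_ind2 (fun a b => 0 <= a /\ fine a = b)%E) => //.
- by move=> a b c d [a0 <-] [c0 <-]; split; [exact: mule_ge0 | exact: fineM_ge0].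
- by move=> i /F_ge0.
Qed.

Lemma prodr_comp_card (R : comPzSemiRingType) (I J : finType) (f : I -> J)
    (F : J -> R) :
  \prod_i F (f i) = \prod_j F j ^+ #|[pred i | f i == j]|.
Proof.
rewrite (partition_big f predT) //; apply: eq_bigr => j _.
by rewrite -prodr_const; apply: eq_big => // i /eqP ->.
Qed.

Lemma sum_card_fiber (I J : finType) (f : I -> J) :
  \sum_j #|[pred i | f i == j]| = #|I|.
Proof.
rewrite -sum1_card (partition_big f predT) //; apply: eq_bigr => j _.
by rewrite -sum1_card.
Qed.

Lemma prodr_expR_ln (R : realType) (I : finType) (c : I -> nat) (p : I -> R) :
  (forall i, c i != 0%N -> 0 < p i) ->
  \prod_i p i ^+ c i = expR (\sum_i (c i)%:R * ln (p i)).
Proof.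
move=> p_gt0; rewrite expR_sum; apply: eq_bigr => i _.
have [->|/p_gt0 pi_gt0] := eqVneq (c i) 0%N; first by rewrite mul0r expR0.
by rewrite expRM_natl lnK.
Qed.

Section Entropy.
Variables (R : realType) (L : nat).

Definition relentR (P q : 'I_L -> R) : R :=
  \sum_l (if P l == 0 then 0 else P l * ln (P l / q l)).

Lemma relentE (P q : 'I_L -> R) :
  (forall l, P l != 0 -> q l != 0) -> relent P q = (relentR P q)%:E.
Proof.
move=> q_neq0; rewrite /relent /relentR -sumEFin; apply: eq_bigr => l _.
by case: ifPn => // /q_neq0 /negbTE ->.
Qed.

Lemma entropy_relentR (P p : 'I_L -> R) (S : R) :
  (forall l, 0 <= P l) -> \sum_l P l = 1 ->
  (forall l, P l != 0 -> 0 < p l) -> 0 < S ->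
  - entropy P - relentR P (fun l => p l / S) + ln S = \sum_l P l * ln (p l).
Proof.
move=> P_ge0 P_sum1 p_gt0 S_gt0.
rewrite /entropy /relentR opprK -[ln S]mul1r -P_sum1 mulr_suml -sumrB -big_split.
apply: eq_bigr => l _ /=.
have [->|Pl] := eqVneq (P l) 0; first by rewrite !mul0r subr0 addr0.
have Pl_gt0 : 0 < P l by rewrite lt_def Pl P_ge0.
have pl_gt0 := p_gt0 l Pl.
by rewrite !ln_div ?posrE ?divr_gt0 //; ring.
Qed.

Lemma type_exponentE (n : nat) (c : 'I_L -> nat) (p : 'I_L -> R) (S : R) :
  (0 < n)%N -> (\sum_l c l)%N = n ->
  (forall l, c l != 0%N -> 0 < p l) -> 0 < S ->
  let P := fun l => (c l)%:R / n%:R in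
  - (n%:R * entropy P) - n%:R * relentR P (fun l => p l / S) + n%:R * ln S =
  \sum_l (c l)%:R * ln (p l).
Proof.
move=> n_gt0 c_sum p_gt0 S_gt0 P.
have n_neq0 : n%:R != 0 :> R by rewrite pnatr_eq0 -lt0n.
have -> : - (n%:R * entropy P) - n%:R * relentR P (fun l => p l / S) + n%:R * ln S =
          n%:R * (- entropy P - relentR P (fun l => p l / S) + ln S) by ring.
rewrite entropy_relentR.
- by rewrite mulr_sumr; apply: eq_bigr => l _; rewrite mulrA mulrCA mulfV ?mulr1.
- by move=> l; rewrite divr_ge0.
- by rewrite -mulr_suml -natr_sum c_sum mulfV.
- by move=> l Pl; apply: p_gt0; apply: contra_neq Pl => cl0; rewrite /P cl0 mul0r.
- exact: S_gt0.
Qed.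
End Entropy.

(* Without this instance every integral against [leb2] has to unfold it to
   the product measure to find its structure, which is prohibitively slow. *)
HB.instance Definition _ (R : realType) :=
  let mu := (@lebesgue_measure R \x @lebesgue_measure R)%E in
  isMeasure.Build _ (R * R)%type R (@leb2 R)
    (measure0 mu) (measure_ge0 mu) (@measure_semi_sigma_additive _ _ _ mu).

Section Channel.
Variables (R : realType) (s2 : R).
Hypothesis s2_gt0 : 0 < s2.

Lemma dens_ge0 x y : 0 <= dens s2 x y.
Proof. by rewrite /dens mulr_ge0 ?expR_ge0 // invr_ge0 mulr_ge0 ?pi_ge0 ?ltW. Qed.

Lemma measurable_dens x : measurable_fun setT (dens s2 x).
Proof.
apply: measurable_funM => //; apply: measurableT_comp => //.
apply: measurable_funN; apply: measurable_funM => //.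
by apply: measurable_funD; apply: measurable_funX; apply: measurable_funB.
Qed.

Lemma intC_ge0 x A : (0 <= intC s2 x A)%E.
Proof. by apply: integral_ge0 => y _; rewrite lee_fin dens_ge0. Qed.

Lemma iint0 n (x : n.-tuple (R * R)) : iint s2 x (fun=> 0%E) = 0%E.
Proof.
elim: n x => [//|n IH] x /=.
by under eq_integral do rewrite IH mule0; exact: integral0.
Qed.

Lemma prodset_cons n (Dt : 'I_n.+1 -> set (R * R)) z (w : n.-tuple (R * R)) :
  prodset Dt (cons_tuple z w) <-> Dt ord0 z /\ prodset (Dt \o lift ord0) w.
Proof.
split=> [Dzw | [Dz Dw] t].
  by split=> [|t]; [have := Dzw ord0 | have := Dzw (lift ord0 t)]; rewrite ?tnth0 ?tnthS.
by case: (unliftP ord0 t) => [t'|] ->; rewrite ?tnth0 ?tnthS //; apply: Dw.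
Qed.

Lemma indic_prodset_cons n (Dt : 'I_n.+1 -> set (R * R)) z (w : n.-tuple (R * R)) :
  \1_(prodset Dt) (cons_tuple z w) =
  \1_(Dt ord0) z * \1_(prodset (Dt \o lift ord0)) w :> R.
Proof.
rewrite !indicE -natrM mulnb.
have -> // : (cons_tuple z w \in prodset Dt) =
  (z \in Dt ord0) && (w \in prodset (Dt \o lift ord0)).
by apply/idP/andP; rewrite !in_setE => /prodset_cons.
Qed.

Lemma iint_indic_prodset n (x : n.-tuple (R * R)) (Dt : 'I_n -> set (R * R)) :
  (forall t, measurable (Dt t)) ->
  iint s2 x (fun w => (\1_(prodset Dt) w)%:E) =
  (\big[*%E/1%E]_(t < n) intC s2 (tnth x t) (Dt t))%E.
Proof.
elim: n x Dt => [|n IH] x Dt mD; first by rewrite big_ord0 /= indicE mem_set // => -[].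
case/tupleP: x => x0 x; rewrite big_ord_recl tnth0 /= theadE.
have -> : behead_tuple (cons_tuple x0 x) = x by apply: val_inj.
set c := (\big[*%E/1%E]_(t < n) _)%E.
have IHc : iint s2 x (fun w => (\1_(prodset (Dt \o lift ord0)) w)%:E) = c.
  by rewrite IH /c => [|t]; [apply: eq_bigr => t _; rewrite tnthS | exact: mD].
have inner z : iint s2 x (fun w => (\1_(prodset Dt) (cons_tuple z w))%:E) =
               ((\1_(Dt ord0) z)%:E * c)%E.
  have [Dz|nDz] := boolP (z \in Dt ord0).
    rewrite indicE Dz mul1e -IHc; congr iint; apply/funext => w.
    by rewrite indic_prodset_cons indicE Dz mul1r.
  rewrite indicE (negbTE nDz) mul0e -(iint0 x); congr iint; apply/funext => w.
  by rewrite indic_prodset_cons indicE (negbTE nDz) mul0r.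
under eq_integral do rewrite inner muleA.
rewrite ge0_integralZr //.
- by rewrite /intC [in RHS]integral_mkcond epatch_indic.
- apply: emeasurable_funM; apply: measurableT_comp => //; exact: measurable_dens.
- by move=> z _; rewrite mule_ge0 // lee_fin ?dens_ge0.
- by apply: prode_ge0 => t _; exact: intC_ge0.
Qed.

Lemma PrCh_prodset n (x : n.-tuple (R * R)) (Dt : 'I_n -> set (R * R)) :
  (forall t, measurable (Dt t)) ->
  PrCh s2 x (prodset Dt) = \prod_(t < n) fine (intC s2 (tnth x t) (Dt t)).
Proof.
move=> mD; rewrite /PrCh iint_indic_prodset // fine_prod_ge0 // => t _.
exact: intC_ge0.
Qed.
End Channel.

Section HomogeneousCode.
Variables (R : realType) (s2 : R) (L n M : nat) (xs : 'I_L -> R * R).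
Variables (u : 'I_M -> n.-tuple (R * R)) (D : 'I_M -> 'I_n -> set (R * R)).
Variable E : 'I_L -> set (R * R).
Hypotheses (s2_gt0 : 0 < s2) (xs_inj : injective xs).
Hypothesis u_sym : forall i t, exists l, tnth (u i) t = xs l.
Hypothesis D_meas : forall i t, measurable (D i t).
Hypothesis D_E : forall i t l, tnth (u i) t = xs l -> D i t = E l.

Definition occurrences i l := #|[set t : 'I_n | tnth (u i) t == xs l]|.

Lemma occurrences_labels {i} {f : 'I_n -> 'I_L} :
  (forall t, tnth (u i) t = xs (f t)) ->
  forall l, occurrences i l = #|[pred t | f t == l]|.
Proof.
move=> uf l; apply: eq_card => t; rewrite [RHS]inE.
by apply/idP/idP; rewrite in_setE /= uf (inj_eq xs_inj).
Qed.

Lemma sum_occurrences i : (\sum_l occurrences i l)%N = n.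
Proof.
have [f uf] := choice (u_sym i).
by rewrite (eq_bigr _ (fun l _ => occurrences_labels uf l)) sum_card_fiber card_ord.
Qed.

Lemma PrCh_codeword i :
  PrCh s2 (u i) (prodset (D i)) =
  \prod_l fine (intC s2 (xs l) (E l)) ^+ occurrences i l.
Proof.
have [f uf] := choice (u_sym i).
pose p l := fine (intC s2 (xs l) (E l)).
rewrite PrCh_prodset // (eq_bigr (fun t => p (f t))) => [|t _]; last first.
  by rewrite (D_E (uf t)) uf.
by rewrite prodr_comp_card; apply: eq_bigr => l _; rewrite (occurrences_labels uf).
Qed.

Lemma homogeneous_occurrences : (0 < n)%N ->
  (forall i l, ctype xs u i l = codetype xs u l) ->
  forall i j l, occurrences i l = occurrences j l.
Proof.
move=> n_gt0 ctypeE i j l; apply/eqP; rewrite -(eqr_nat R).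
have occurrencesE k : (occurrences k l)%:R = n%:R * ctype xs u k l :> R.
  by rewrite /ctype mulrA mulfV ?mul1r // pnatr_eq0 -lt0n.
by rewrite !occurrencesE !ctypeE.
Qed.

Lemma gamma_occurrences i0 : (forall i l, occurrences i l = occurrences i0 l) ->
  gamma s2 u D = 1 - \prod_l fine (intC s2 (xs l) (E l)) ^+ occurrences i0 l.
Proof.
set succ := \prod_l _; move=> occurrences_i0.
rewrite /gamma (eq_bigr (fun=> 1 - succ)) => [|i _].
  rewrite sumr_const card_ord -[(1 - _) *+ M]mulr_natl mulrA mulVf ?mul1r //.
  by rewrite pnatr_eq0 -lt0n (leq_ltn_trans _ (ltn_ord i0)).
by rewrite /gamma_i PrCh_codeword /succ; under eq_bigr do rewrite occurrences_i0.
Qed.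
End HomogeneousCode.

Unset Implicit Arguments.

Theorem corollary2 (R : realType) (n M L : nat) (xs : 'I_L -> R * R) (P s2 : R)
    (g : R * R -> \bar R) (eps B delta : R)
    (u : 'I_M -> n.-tuple (R * R)) (D : 'I_M -> 'I_n -> set (R * R))
    (E : 'I_L -> set (R * R)) :
  (0 < n)%N -> (0 < M)%N -> injective xs -> 0 < P -> 0 < s2 ->
  measurable_fun setT g -> 0 < eps ->
  is_code_eBd xs P s2 g eps B delta u D ->
  homogeneous xs s2 u D E ->
  let p := fun l => fine (intC s2 (xs l) (E l)) in
  let S := \sum_(j < L) p j in
  0 < S ->
  let Q := fun l => p l / S in
  let PC := codetype xs u in
  (1 - expeR (- (n%:R * entropy PC)%:E - n%:R%:E * relent PC Q
              + (n%:R * ln S)%:E) <= eps%:E)%E.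
Proof.
move=> n_gt0 M_gt0 xs_inj _ s2_gt0 _ _ [[u_sym _ D_meas _ _] gamma_lt_eps _].
(* The trailing [let]s sit inside a boolean, so they are unfolded rather
   than introduced. *)
move=> [_ ctypeE D_E] p S S_gt0; cbv zeta.
pose i0 := Ordinal M_gt0; pose c := occurrences xs u i0.
have occ_i0 i l : occurrences xs u i l = c l by apply: homogeneous_occurrences.
have gammaE : gamma s2 u D = 1 - \prod_l p l ^+ c l by apply: gamma_occurrences.
have -> : codetype xs u = fun l => (c l)%:R / n%:R.
  by apply/funext => l; rewrite -(ctypeE i0) mulrC.
have [/existsP[l /andP[cl_neq0 /eqP pl0]] | /existsPn p_pos] :=
  boolP [exists l, (c l != 0%N) && (p l == 0)].
  have gamma1 : gamma s2 u D = 1.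
    by rewrite gammaE (bigD1 l) //= pl0 expr0n (negbTE cl_neq0) mul0r subr0.
  apply: le_trans (_ : 1%E <= _)%E; last by rewrite lee_fin -gamma1 ltW.
  by rewrite geeDl // oppe_le0 expeR_ge0.
have p_gt0 l : c l != 0%N -> 0 < p l.
  move=> cl_neq0; rewrite lt_def fine_ge0 ?intC_ge0 ?andbT //.
  by apply: contra (p_pos l) => ->; rewrite cl_neq0.
rewrite relentE => [|l Pl]; last first.
  rewrite gt_eqF // divr_gt0 // p_gt0 //.
  by apply: contra_neq Pl => ->; rewrite mul0r.
rewrite -EFinM -EFinN -EFinD lee_fin type_exponentE // ?sum_occurrences //.
by rewrite -prodr_expR_ln // -gammaE ltW.
Qed.
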